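(* Let $\mathcal M=(M,<,+,0,\ldots)$ be a definably complete locally o-minimal expansion of an ordered abelian group. Let $C$ be a definable set, $s>0$, and let $\{f_t:C\to M\}_{0<t<s}$ be a definable family of pointwise bounded functions. Then the family is pointwise convergent.
   Context: Definable = with parameters; definably complete and locally o-minimal as standard. A definable family $\{f_t\}_{0<t<s}$ is given by a definable $F:C\times(0,s)\to M$ with $f_t(x)=F(x,t)$. It is pointwise bounded if for every $x\in C$ there is $N>0$ with $|f_t(x)|<N$ for all $t\in(0,s)$. It is pointwise convergent if for every $\varepsilon>0$ and $x\in C$ there is $s'>0$ such that $|f_t(x)-f_{t'}(x)|<\varepsilon$ for all $t,t'\in(0,s')$. *)

From Stdlib Require Import List Arith.
Import ListNotations.
Set Implicit Arguments.

Record OAG := {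
  car :> Type;
  zero : car;
  add : car -> car -> car;
  opp : car -> car;
  lt : car -> car -> Prop;
  addA : forall x y z, add x (add y z) = add (add x y) z;
  addC : forall x y, add x y = add y x;
  add0 : forall x, add zero x = x;
  addN : forall x, add (opp x) x = zero;
  lt_irr : forall x, ~ lt x x;
  lt_trans : forall x y z, lt x y -> lt y z -> lt x z;
  lt_total : forall x y, lt x y \/ x = y \/ lt y x;
  lt_add : forall x y z, lt x y -> lt (add x z) (add y z)
}.

Definition sub {M : OAG} (x y : M) : M := add M x (opp M y).
Definition abs_lt {M : OAG} (x e : M) : Prop := lt M (opp M e) x /\ lt M x e.

(* A (first-order) structure on M with parameters, in the sense of van den Dries:
   Def n A  means  A (a set of tuples = lists of length n) is definable. *)
Record structure (M : OAG) := {
  Def : nat -> (list M -> Prop) -> Prop;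
  Def_ext : forall n (A B : list M -> Prop),
      (forall x, A x <-> B x) -> Def n A -> Def n B;
  Def_len : forall n A, Def n A -> forall x, A x -> length x = n;
  Def_empty : forall n, Def n (fun _ => False);
  Def_compl : forall n A, Def n A -> Def n (fun x => length x = n /\ ~ A x);
  Def_union : forall n A B, Def n A -> Def n B -> Def n (fun x => A x \/ B x);
  Def_prodr : forall n A, Def n A ->
      Def (S n) (fun x => exists y a, x = y ++ [a] /\ A y);
  Def_prodl : forall n A, Def n A ->
      Def (S n) (fun x => exists a y, x = a :: y /\ A y);
  Def_diag : forall n i j, i < j < n ->
      Def n (fun x => length x = n /\ nth i x (zero M) = nth j x (zero M));
  Def_proj : forall n A, Def (S n) A -> Def n (fun y => exists a, A (y ++ [a]));
  (* expansion of the ordered group (M,<,+,0) *)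
  Def_lt : Def 2 (fun x => exists a b, x = [a; b] /\ lt M a b);
  Def_add : Def 3 (fun x => exists a b, x = [a; b; add M a b]);
  Def_zero : Def 1 (fun x => x = [zero M]);
  (* parameters allowed *)
  Def_point : forall a : M, Def 1 (fun x => x = [a])
}.

Definition Def1 (M : OAG) (S : structure M) (X : M -> Prop) : Prop :=
  Def S 1 (fun x => exists a, x = [a] /\ X a).

Definition definably_complete (M : OAG) (S : structure M) : Prop :=
  forall X : M -> Prop, Def1 S X -> (exists a, X a) ->
    (exists b, forall x, X x -> ~ lt M b x) ->
    exists b, (forall x, X x -> ~ lt M b x) /\
              (forall c, (forall x, X x -> ~ lt M c x) -> ~ lt M c b).

Definition locally_o_minimal (M : OAG) (S : structure M) : Prop :=
  forall (X : M -> Prop) (a : M), Def1 S X ->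
    exists b c, lt M b a /\ lt M a c /\
      exists (pts : list M) (ivs : list (M * M)),
        forall x, (lt M b x /\ lt M x c /\ X x) <->
          (In x pts \/ exists p, In p ivs /\ lt M (fst p) x /\ lt M x (snd p)).

From Stdlib Require Import List PeanoNat Lia Classical.
Import ListNotations.

(* Let D be the set of c such that c < f_t(x) for all small t > 0.  D is
   definable, contains -N and, unless 0 is isolated from the right (when the
   claim is vacuous), is bounded above by N; definable completeness gives its
   supremum L.  For d > 0, the sup property makes f_t(x) > L - d eventually.
   The set of t with f_t(x) > L + d is definable, so by local o-minimality at 0
   it either contains or avoids a right neighbourhood of 0; the first case would
   put L + d in D.  So eventually f_t(x) lies in (L - d, L + d], and taking
   2d <= e gives the Cauchy condition. *)

Lemma app_inj_length {A : Type} (l1 l2 m1 m2 : list A) :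
  l1 ++ l2 = m1 ++ m2 -> length l1 = length m1 -> l1 = m1 /\ l2 = m2.
Proof.
  revert m1; induction l1 as [|a l1 IH]; intros [|b m1] E Hl; simpl in *;
    try discriminate; auto.
  injection E as -> E. destruct (IH m1 E) as [-> ->]; auto.
Qed.

Definition Def2 {M : OAG} (S : structure M) (R : M -> M -> Prop) : Prop :=
  Def S 2 (fun w => exists a b, w = [a; b] /\ R a b).

Section Definability.
Context {M : OAG} (S : structure M).
Notation z0 := (zero M).

Lemma def_inter {n A B} : Def S n A -> Def S n B -> Def S n (fun x => A x /\ B x).
Proof.
  intros HA HB.
  eapply Def_ext;
    [|exact (Def_compl S _ _ (Def_union S _ _ _ (Def_compl S _ _ HA) (Def_compl S _ _ HB)))].
  intro x; split.
  - intros [Hl Hn]. split; apply NNPP; intro Hc; apply Hn; tauto.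
  - intros [Ha Hb]. split; [exact (Def_len S _ _ HA x Ha)|tauto].
Qed.

Lemma def_full n : Def S n (fun x => length x = n).
Proof. eapply Def_ext; [|exact (Def_compl S _ _ (Def_empty S n))]. intro x; tauto. Qed.

Lemma def_prodl_iter {n} k {A} : Def S n A ->
  Def S (k + n) (fun z => exists l y, z = l ++ y /\ length l = k /\ A y).
Proof.
  intro HA. induction k as [|k IH].
  - eapply Def_ext; [|exact HA]. intro x; split.
    + intro H; exists [], x; auto.
    + intros ([|] & y & -> & Hl & Hy); [exact Hy|discriminate].
  - eapply Def_ext; [|exact (Def_prodl S _ _ IH)]. intro x; split.
    + intros (a & y & -> & l & w & -> & Hl & Hw). exists (a :: l), w. simpl; auto.
    + intros ([|a l] & y & -> & Hl & Hy); [discriminate|].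
      exists a, (l ++ y). split; [reflexivity|]. exists l, y. simpl in Hl. auto.
Qed.

Lemma def_proj_iter n k {A} : Def S (n + k) A ->
  Def S n (fun y => exists l, length l = k /\ A (y ++ l)).
Proof.
  revert n A. induction k as [|k IH]; intros n A HA.
  - rewrite Nat.add_0_r in HA. eapply Def_ext; [|exact HA]. intro x; split.
    + intro H; exists []; rewrite app_nil_r; auto.
    + intros ([|] & Hl & H); [rewrite app_nil_r in H; exact H|discriminate].
  - rewrite Nat.add_succ_r in HA.
    eapply Def_ext; [|exact (IH _ _ (Def_proj S _ _ HA))]. intro y; split.
    + intros (l & Hl & a & Ha). exists (l ++ [a]).
      rewrite length_app, Hl, app_assoc. split; [simpl; lia|exact Ha].
    + intros (l & Hl & H). destruct (exists_last (l:=l)) as (l' & a & ->).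
      { intros ->; discriminate. }
      rewrite length_app in Hl; simpl in Hl. exists l'. split; [lia|].
      exists a. rewrite <- app_assoc. exact H.
Qed.

Lemma def_forall_lt {K m} {P : nat -> list M -> Prop} :
  (forall i, i < m -> Def S K (fun z => length z = K /\ P i z)) ->
  Def S K (fun z => length z = K /\ forall i, i < m -> P i z).
Proof.
  induction m as [|m IH]; intro HP.
  - eapply Def_ext; [|exact (def_full K)]. intro z; split; [|tauto].
    intro; split; auto; intros; lia.
  - eapply Def_ext; [|exact (def_inter (IH (fun i Hi => HP i ltac:(lia))) (HP m ltac:(lia)))].
    intro z; split.
    + intros [[Hz Hi] [_ Hm]]. split; [exact Hz|]. intros i Hi'.
      destruct (Nat.eq_dec i m) as [->|Hne]; [exact Hm|apply Hi; lia].
    + intros [Hz Hi]. repeat split; auto.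
Qed.

Lemma def_lift1 {P : M -> Prop} K i : Def1 S P -> i < K ->
  Def S K (fun z => length z = K /\ P (nth i z z0)).
Proof.
  intros HP Hi.
  pose proof (def_inter (def_prodl_iter K HP) (Def_diag S (ltac:(lia) : i < K < K + 1))) as H.
  eapply Def_ext; [|exact (def_proj_iter K 1 H)]. intro y; split.
  - intros (l & Hl & (l' & w & E & Hl' & a & -> & Ha) & Hlen & Hn).
    rewrite length_app in Hlen.
    destruct (app_inj_length _ _ _ _ E ltac:(lia)) as [<- ->].
    rewrite app_nth1 in Hn by lia. rewrite app_nth2 in Hn by lia.
    rewrite Hl', Nat.sub_diag in Hn. simpl in Hn. rewrite Hn. auto.
  - intros [Hy HPy]. exists [nth i y z0]. split; [reflexivity|]. split.
    + exists y, [nth i y z0]. repeat split; auto. exists (nth i y z0); auto.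
    + rewrite length_app, Hy, app_nth1, app_nth2, Hy, Nat.sub_diag by lia.
      simpl; split; [lia|reflexivity].
Qed.

Lemma def_lift2 {R : M -> M -> Prop} K i j : Def2 S R -> i < K -> j < K ->
  Def S K (fun z => length z = K /\ R (nth i z z0) (nth j z z0)).
Proof.
  intros HR Hi Hj.
  pose proof (def_inter (def_inter (def_prodl_iter K HR)
    (Def_diag S (ltac:(lia) : i < K < K + 2))) (Def_diag S (ltac:(lia) : j < K + 1 < K + 2))) as H.
  eapply Def_ext; [|exact (def_proj_iter K 2 H)]. intro y; split.
  - intros (l & Hl & ((l' & w & E & Hl' & a & b & -> & Hab) & Hlen & Hn1) & _ & Hn2).
    rewrite length_app in Hlen.
    destruct (app_inj_length _ _ _ _ E ltac:(lia)) as [<- ->].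
    rewrite app_nth1 in Hn1, Hn2 by lia. rewrite app_nth2 in Hn1, Hn2 by lia.
    rewrite Hl', Nat.sub_diag in Hn1. rewrite Hl' in Hn2.
    replace (K + 1 - K) with 1 in Hn2 by lia. simpl in Hn1, Hn2. rewrite Hn1, Hn2. auto.
  - intros [<- HRy]. exists [nth i y z0; nth j y z0]. split; [reflexivity|].
    rewrite length_app, (app_nth1 _ _ _ Hi), (app_nth1 _ _ _ Hj), nth_middle,
      app_nth2_plus.
    repeat split.
    exists y, [nth i y z0; nth j y z0]. repeat split; auto.
    exists (nth i y z0), (nth j y z0). auto.
Qed.

Lemma def1_point a : Def1 S (fun b => b = a).
Proof.
  eapply Def_ext; [|exact (Def_point S a)]. intro w; split.
  - intros ->; eauto.
  - intros (b & -> & ->); reflexivity.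
Qed.

Lemma def_fiber n k {A} x : Def S (n + k) A -> length x = n ->
  Def S k (fun y => A (x ++ y)).
Proof.
  intros HA Hx. set (K := k + (n + k)).
  assert (Hfix : Def S K (fun z => length z = K /\
      forall i, i < n -> nth (k + i) z z0 = nth i x z0)).
  { apply def_forall_lt. intros i Hi.
    exact (def_lift1 K (k + i) (def1_point (nth i x z0)) ltac:(unfold K; lia)). }
  assert (Hcopy : Def S K (fun z => length z = K /\
      forall i, i < k -> nth i z z0 = nth (k + n + i) z z0)).
  { apply def_forall_lt. intros i Hi. apply Def_diag. unfold K; lia. }
  pose proof (def_inter (def_prodl_iter k HA) (def_inter Hfix Hcopy)) as H.
  eapply Def_ext; [|exact (def_proj_iter k (n + k) H)]. intro y; split.
  - intros (l & Hl & (l' & w & E & Hl' & Aw) & (Hlen & Hf) & _ & Hc).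
    rewrite length_app in Hlen. unfold K in Hlen.
    destruct (app_inj_length _ _ _ _ E ltac:(lia)) as [<- ->].
    replace (x ++ y) with w; [exact Aw|].
    apply nth_ext with z0 z0; [rewrite length_app; lia|]. intros i Hi.
    destruct (Nat.lt_ge_cases i n) as [Hin|Hin].
    + rewrite app_nth1, <- Hf, <- Hl', app_nth2_plus by lia. reflexivity.
    + rewrite app_nth2, Hx by lia. specialize (Hc (i - n) ltac:(lia)).
      rewrite app_nth1 in Hc by lia. rewrite Hc.
      replace (k + n + (i - n)) with (length y + i) by lia.
      symmetry; apply app_nth2_plus.
  - intro Axy. pose proof (Def_len S _ _ HA _ Axy) as Hlen.
    rewrite length_app in Hlen. exists (x ++ y). split; [rewrite length_app; lia|].
    split; [exists y, (x ++ y); repeat split; auto; lia|]. split; split.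
    + rewrite !length_app. unfold K; lia.
    + intros i Hi. replace (k + i) with (length y + i) by lia.
      rewrite app_nth2_plus, app_nth1 by lia. reflexivity.
    + rewrite !length_app. unfold K; lia.
    + intros i Hi. replace (k + n + i) with (length y + (length x + i)) by lia.
      rewrite !app_nth2_plus, app_nth1 by lia. reflexivity.
Qed.

Lemma def1_compl {P : M -> Prop} : Def1 S P -> Def1 S (fun a => ~ P a).
Proof.
  intro HP. eapply Def_ext; [|exact (Def_compl S _ _ HP)]. intro w; split.
  - intros [Hl Hn]. destruct w as [|a [|b w]]; try discriminate.
    exists a; split; auto. intro H; apply Hn; eauto.
  - intros (a & -> & H). split; [reflexivity|]. intros (a' & E & H').
    injection E as ->. auto.
Qed.

Lemma def2_compl {R : M -> M -> Prop} : Def2 S R -> Def2 S (fun a b => ~ R a b).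
Proof.
  intro HR. eapply Def_ext; [|exact (Def_compl S _ _ HR)]. intro w; split.
  - intros [Hl Hn]. destruct w as [|a [|b [|c w]]]; try discriminate.
    exists a, b; split; auto. intro H; apply Hn; eauto.
  - intros (a & b & -> & H). split; [reflexivity|]. intros (a' & b' & E & H').
    injection E as -> ->. auto.
Qed.

Lemma def1_gt c : Def1 S (lt M c).
Proof.
  eapply Def_ext; [|exact (def_fiber 1 1 [c] (Def_lt S) eq_refl)]. intro w; split.
  - intros (a & b & E & H). injection E as -> ->. eauto.
  - intros (a & -> & H). exists c, a. auto.
Qed.
End Definability.

Section OrderedGroup.
Context {M : OAG}.
Notation "0" := (zero M).
Notation "a + b" := (add M a b).
Notation "- a" := (opp M a).
Notation "a < b" := (lt M a b).

Lemma lt_nlt_trans {a b c} : a < b -> ~ c < b -> a < c.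
Proof.
  intros Hab Hcb. destruct (lt_total M b c) as [H|[<-|H]];
    [exact (lt_trans M _ _ _ Hab H)|exact Hab|contradiction].
Qed.

Lemma nlt_trans {a b c} : ~ b < a -> ~ c < b -> ~ c < a.
Proof. intros Hba Hcb Hca. exact (Hcb (lt_nlt_trans Hca Hba)). Qed.

Lemma nlt_lt_trans {a b c} : ~ b < a -> b < c -> a < c.
Proof.
  intros Hab Hbc. destruct (lt_total M a b) as [H|[->|H]];
    [exact (lt_trans M _ _ _ H Hbc)|exact Hbc|contradiction].
Qed.

Lemma exists_pos_min {r1 r2} : 0 < r1 -> 0 < r2 -> exists r, 0 < r /\ ~ r1 < r /\ ~ r2 < r.
Proof.
  intros H1 H2. destruct (lt_total M r1 r2) as [H|[<-|H]].
  - exists r1. split; [exact H1|]. split; [apply lt_irr|].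
    intro H'. exact (lt_irr M _ (lt_trans M _ _ _ H H')).
  - exists r1. split; [exact H1|]. split; apply lt_irr.
  - exists r2. split; [exact H2|]. split; [|apply lt_irr].
    intro H'. exact (lt_irr M _ (lt_trans M _ _ _ H H')).
Qed.

Lemma addr0 x : x + 0 = x.
Proof. rewrite addC; apply add0. Qed.

Lemma addrN x : x + - x = 0.
Proof. rewrite addC; apply addN. Qed.

Lemma addCA x y z : x + (y + z) = y + (x + z).
Proof. rewrite !addA, (addC M x y). reflexivity. Qed.

Lemma addACA a b c d : (a + b) + (c + d) = (a + c) + (b + d).
Proof. rewrite <- !addA. f_equal. apply addCA. Qed.

Lemma opp_unique x y : y + x = 0 -> - x = y.
Proof. intro H. rewrite <- (add0 M (- x)), <- H, <- addA, addrN, addr0. reflexivity. Qed.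

Lemma oppD a b : - (a + b) = - a + - b.
Proof. apply opp_unique. rewrite addACA, !addN, add0. reflexivity. Qed.

Lemma oppK a : - - a = a.
Proof. apply opp_unique, addrN. Qed.

Lemma lt_add2l {a b} c : a < b -> c + a < c + b.
Proof. intro H. rewrite !(addC M c). apply lt_add; exact H. Qed.

Lemma nlt_lt_add {a b c d} : ~ b < a -> c < d -> a + c < b + d.
Proof.
  intros Hab Hcd. destruct (lt_total M a b) as [H|[<-|H]].
  - exact (lt_trans M _ _ _ (lt_add M _ _ c H) (lt_add2l b Hcd)).
  - exact (lt_add2l a Hcd).
  - contradiction.
Qed.

Lemma lt_opp {a b} : a < b -> - b < - a.
Proof.
  intro H. pose proof (lt_add M _ _ (- a + - b) H) as H'.
  rewrite addA, addrN, add0, addCA, addrN, addr0 in H'. exact H'.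
Qed.

Lemma lt_addr_self L {d} : 0 < d -> L < L + d.
Proof. intro H. rewrite <- (addr0 L) at 1. exact (lt_add2l L H). Qed.

Lemma lt_subr_self L {d} : 0 < d -> L + - d < L.
Proof.
  intro H. rewrite <- (addr0 L) at 2. apply lt_add2l.
  rewrite <- (addN M d), <- (addr0 (- d)) at 1. exact (lt_add2l (- d) H).
Qed.

Lemma sub_lt_of_window {L d a b e} :
  L + - d < b -> ~ L + d < a -> ~ e < d + d -> sub a b < e.
Proof.
  intros Hb Ha He. unfold sub.
  pose proof (nlt_lt_add Ha (lt_opp Hb)) as H.
  rewrite oppD, oppK, addACA, addrN, add0 in H. exact (lt_nlt_trans H He).
Qed.

Lemma abs_lt_sub_of_window {L d a b e} :
  L + - d < a -> ~ L + d < a -> L + - d < b -> ~ L + d < b ->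
  ~ e < d + d -> abs_lt (sub a b) e.
Proof.
  intros Ha1 Ha2 Hb1 Hb2 He. split; [|exact (sub_lt_of_window Hb1 Ha2 He)].
  pose proof (lt_opp (sub_lt_of_window Ha1 Hb2 He)) as H.
  unfold sub in *. rewrite oppD, oppK, addC in H. exact H.
Qed.

Lemma exists_half {e} : 0 < e -> (forall r, 0 < r -> exists t, 0 < t /\ t < r) ->
  exists d, 0 < d /\ ~ e < d + d.
Proof.
  intros He Hdense. destruct (Hdense e He) as (d0 & Hd0 & Hd0e).
  destruct (classic (e < d0 + d0)) as [Hlt|Hn]; [|exists d0; auto].
  (* when [e < d0 + d0], the witness [e - d0] satisfies [2 (e - d0) < e] *)
  exists (e + - d0). split.
  - pose proof (lt_add M _ _ (- d0) Hd0e) as H. rewrite addrN in H. exact H.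
  - intro Hc. pose proof (lt_add2l e (lt_add M _ _ (- d0 + - d0) Hlt)) as H.
    rewrite <- oppD, addrN, addr0, oppD, addA, addACA in H.
    exact (lt_irr M _ (lt_trans M _ _ _ H Hc)).
Qed.
End OrderedGroup.

Section Near0.
Context {M : OAG} (s : M).
Notation "0" := (zero M).
Notation "a < b" := (lt M a b).

Definition near0 (P : M -> Prop) : Prop :=
  exists r, 0 < r /\ ~ s < r /\ forall t, 0 < t -> t < r -> P t.

Lemma near0_and {P Q} : near0 P -> near0 Q -> near0 (fun t => P t /\ Q t).
Proof.
  intros (r1 & H1 & Hs1 & HP) (r2 & H2 & Hs2 & HQ).
  destruct (exists_pos_min H1 H2) as (r & Hr & Hr1 & Hr2).
  exists r. split; [exact Hr|]. split; [exact (nlt_trans Hr1 Hs1)|].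
  intros t Ht Htr. split; [apply HP|apply HQ]; try exact Ht.
  - exact (lt_nlt_trans Htr Hr1).
  - exact (lt_nlt_trans Htr Hr2).
Qed.

Lemma near0_impl {P Q : M -> Prop} :
  (forall t, 0 < t -> t < s -> P t -> Q t) -> near0 P -> near0 Q.
Proof.
  intros H (r & Hr & Hrs & HP). exists r. repeat split; auto.
  intros t Ht Htr. exact (H t Ht (lt_nlt_trans Htr Hrs) (HP t Ht Htr)).
Qed.

Lemma near0_pos (P : M -> Prop) : 0 < s -> (forall t, 0 < t -> t < s -> P t) -> near0 P.
Proof. intros Hs H. exists s. repeat split; auto. apply lt_irr. Qed.

Lemma near0_lt {a} : 0 < s -> 0 < a -> near0 (fun t => t < a).
Proof.
  intros Hs Ha. destruct (exists_pos_min Ha Hs) as (r & Hr & Hra & Hrs).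
  exists r. repeat split; auto. intros t _ Ht. exact (lt_nlt_trans Ht Hra).
Qed.

Lemma near0_notin pts : 0 < s -> near0 (fun t => ~ In t pts).
Proof.
  intro Hs. induction pts as [|q pts IH].
  - apply near0_pos; auto.
  - assert (Hq : near0 (fun t => t <> q)).
    { destruct (classic (0 < q)) as [Hq|Hq].
      + eapply near0_impl; [|exact (near0_lt Hs Hq)].
        intros t _ _ Ht ->. exact (lt_irr M _ Ht).
      + apply near0_pos; [exact Hs|]. intros t Ht _ ->. auto. }
    eapply near0_impl; [|exact (near0_and Hq IH)].
    intros t _ _ [Hne Hnin] [->|Hin]; auto.
Qed.

Lemma near0_interval_dec a b : 0 < s ->
  near0 (fun t => a < t /\ t < b) \/ near0 (fun t => ~ (a < t /\ t < b)).
Proof.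
  intro Hs. destruct (classic (0 < a)) as [Ha|Ha].
  { right. eapply near0_impl; [|exact (near0_lt Hs Ha)].
    intros t _ _ Hta [Hat _]. exact (lt_irr M _ (lt_trans M _ _ _ Hta Hat)). }
  destruct (classic (0 < b)) as [Hb|Hb].
  - left. eapply near0_impl; [|exact (near0_lt Hs Hb)].
    intros t Ht _ Htb. exact (conj (nlt_lt_trans Ha Ht) Htb).
  - right. apply near0_pos; [exact Hs|]. intros t Ht _ [_ Htb].
    exact (Hb (lt_trans M _ _ _ Ht Htb)).
Qed.

Definition in_intervals (ivs : list (M * M)) (t : M) : Prop :=
  exists p, In p ivs /\ fst p < t /\ t < snd p.

Lemma near0_intervals_dec ivs : 0 < s ->
  near0 (in_intervals ivs) \/ near0 (fun t => ~ in_intervals ivs t).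
Proof.
  intro Hs. induction ivs as [|p ivs IH].
  { right. apply near0_pos; [exact Hs|]. intros t _ _ (p & [] & _). }
  destruct (near0_interval_dec (fst p) (snd p) Hs) as [Hp|Hp].
  { left. eapply near0_impl; [|exact Hp]. intros t _ _ Ht. exists p. split; [left|]; auto. }
  destruct IH as [HI|HI].
  - left. eapply near0_impl; [|exact HI].
    intros t _ _ (q & Hq & Hqt). exists q. split; [right|]; auto.
  - right. eapply near0_impl; [|exact (near0_and Hp HI)].
    intros t _ _ [Hnp Hni] (q & [<-|Hq] & Hqt); [exact (Hnp Hqt)|].
    apply Hni. exists q. auto.
Qed.

Lemma near0_dec_of_local_finite (X : M -> Prop) : 0 < s ->
  (exists b c, b < 0 /\ 0 < c /\ exists (pts : list M) (ivs : list (M * M)),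
     forall t, (b < t /\ t < c /\ X t) <-> (In t pts \/ in_intervals ivs t)) ->
  near0 X \/ near0 (fun t => ~ X t).
Proof.
  intros Hs (b & c & Hb & Hc & pts & ivs & Hiff).
  destruct (near0_intervals_dec ivs Hs) as [H|H].
  - left. eapply near0_impl; [|exact H]. intros t _ _ Ht.
    apply (proj2 (Hiff t)); auto.
  - right. eapply near0_impl;
      [|exact (near0_and H (near0_and (near0_notin pts Hs) (near0_lt Hs Hc)))].
    intros t Ht _ (Hni & Hnp & Htc) HX.
    destruct (proj1 (Hiff t) (conj (lt_trans M _ _ _ Hb Ht) (conj Htc HX))); auto.
Qed.
End Near0.

Section EventualInfimum.
Context {M : OAG} (S : structure M) {n : nat} {C : list M -> Prop} {s : M}
  {F : list M -> M -> M}.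
Hypothesis hC : Def S n C.
Hypothesis hF : Def S (n + 2) (fun z => exists x t,
  z = x ++ [t; F x t] /\ C x /\ lt M (zero M) t /\ lt M t s).
Variable x : list M.
Hypothesis Cx : C x.
Notation z0 := (zero M).
Notation "a < b" := (lt M a b).

Lemma def2_graph_fiber : Def2 S (fun t a => z0 < t /\ t < s /\ a = F x t).
Proof.
  pose proof (Def_len S _ _ hC x Cx) as Hx.
  eapply Def_ext; [|exact (def_fiber S n 2 x hF Hx)]. intro w; split.
  - intros (x' & t & E & Cx' & Ht & Hts).
    destruct (app_inj_length _ _ _ _ E (eq_trans Hx (eq_sym (Def_len S _ _ hC x' Cx'))))
      as [<- ->].
    exists t, (F x t). auto.
  - intros (t & a & -> & Ht & Hts & ->). exists x, t. auto.
Qed.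

Lemma def1_superlevel c : Def1 S (fun t => z0 < t /\ t < s /\ c < F x t).
Proof.
  pose proof (def_inter S (def_lift2 S 2 0 1 def2_graph_fiber ltac:(lia) ltac:(lia))
    (def_lift1 S 2 1 (def1_gt S c) ltac:(lia))) as H.
  eapply Def_ext; [|exact (def_proj_iter S 1 1 H)]. intro y; split.
  - intros (l & Hl & (Hlen & Hg) & _ & Hc).
    rewrite length_app, Hl in Hlen.
    destruct l as [|a [|]]; try discriminate. destruct y as [|t [|]]; simpl in Hlen; try lia.
    simpl in Hg, Hc. destruct Hg as (Ht & Hts & ->). exists t. auto.
  - intros (t & -> & Ht & Hts & Hc). exists [F x t]. simpl. repeat split; auto.
Qed.

Lemma def2_eventual_failure :
  Def2 S (fun c r => exists t, z0 < t /\ t < s /\ t < r /\ ~ c < F x t).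
Proof.
  pose proof (def_inter S (def_inter S (def_lift2 S 4 2 3 def2_graph_fiber ltac:(lia) ltac:(lia))
    (def_lift2 S 4 2 1 (Def_lt S) ltac:(lia) ltac:(lia)))
    (def_lift2 S 4 0 3 (def2_compl S (Def_lt S)) ltac:(lia) ltac:(lia))) as H.
  eapply Def_ext; [|exact (def_proj_iter S 2 2 H)]. intro y; split.
  - intros (l & Hl & ((Hlen & Hg) & _ & Htr) & _ & Hnc).
    rewrite length_app, Hl in Hlen.
    destruct l as [|t [|a [|]]]; try discriminate.
    destruct y as [|c [|r [|]]]; simpl in Hlen; try lia.
    simpl in Hg, Htr, Hnc. destruct Hg as (Ht & Hts & ->).
    exists c, r. split; [reflexivity|]. exists t. auto.
  - intros (c & r & -> & t & Ht & Hts & Htr & Hnc). exists [t; F x t]. simpl.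
    repeat split; auto.
Qed.

Lemma def1_near0_lower : Def1 S (fun c => near0 s (fun t => c < F x t)).
Proof.
  pose proof (def_inter S (def_inter S (Def_compl S _ _ def2_eventual_failure)
    (def_lift1 S 2 1 (def1_gt S z0) ltac:(lia)))
    (def_lift1 S 2 1 (def1_compl S (def1_gt S s)) ltac:(lia))) as H.
  eapply Def_ext; [|exact (def_proj_iter S 1 1 H)]. intro y; split.
  - intros (l & Hl & ((Hlen & Hfail) & _ & Hr) & _ & Hrs).
    rewrite length_app, Hl in Hlen.
    destruct l as [|r [|]]; try discriminate. destruct y as [|c [|]]; simpl in Hlen; try lia.
    simpl in Hr, Hrs. exists c. split; [reflexivity|]. exists r. repeat split; auto.
    intros t Ht Htr. apply NNPP. intro Hnc. apply Hfail. exists c, r. split; [reflexivity|].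
    exists t. repeat split; auto. exact (lt_nlt_trans Htr Hrs).
  - intros (c & -> & r & Hr & Hrs & Hall). exists [r]. simpl. repeat split; auto.
    intros (a & b & E & t & Ht & _ & Htr & Hnc). injection E as <- <-.
    exact (Hnc (Hall t Ht Htr)).
Qed.
End EventualInfimum.

Section EventualLimit.
Context {M : OAG} (S : structure M) {n : nat} {C : list M -> Prop} {s : M}
  {F : list M -> M -> M}.
Hypothesis hdc : definably_complete S.
Hypothesis hlom : locally_o_minimal S.
Hypothesis hC : Def S n C.
Hypothesis hF : Def S (n + 2) (fun z => exists x t,
  z = x ++ [t; F x t] /\ C x /\ lt M (zero M) t /\ lt M t s).
Hypothesis hs : lt M (zero M) s.
Variable x : list M.
Hypothesis Cx : C x.
Notation "0" := (zero M).
Notation "a < b" := (lt M a b).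
Notation "a + b" := (add M a b).
Notation "- a" := (opp M a).
Notation lower_bound c := (near0 s (fun t => c < F x t)).

Lemma near0_gt_sub_of_sup L :
  (forall c, (forall b, lower_bound b -> ~ c < b) -> ~ c < L) ->
  forall d, 0 < d -> near0 s (fun t => L + - d < F x t).
Proof.
  intros Hsup d Hd.
  destruct (classic (exists b, lower_bound b /\ L + - d < b)) as [(b & Hb & Hdb)|Hnone].
  - eapply near0_impl; [|exact Hb]. intros t _ _ Hbt. exact (lt_trans M _ _ _ Hdb Hbt).
  - exfalso. apply (Hsup (L + - d)); [|exact (lt_subr_self L Hd)].
    intros b Hb Hdb. exact (Hnone (ex_intro _ b (conj Hb Hdb))).
Qed.

Lemma near0_not_gt_add_of_sup L :
  (forall b, lower_bound b -> ~ L < b) ->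
  forall d, 0 < d -> near0 s (fun t => ~ L + d < F x t).
Proof.
  intros Hub d Hd.
  destruct (near0_dec_of_local_finite s _ hs
    (hlom _ 0 (def1_superlevel S hC hF x Cx (L + d)))) as [Hgt|Hngt].
  - exfalso. apply (Hub (L + d)); [|exact (lt_addr_self L Hd)].
    eapply near0_impl; [|exact Hgt]. intros t _ _ (_ & _ & Hlt). exact Hlt.
  - eapply near0_impl; [|exact Hngt].
    intros t Ht Hts Hn Hlt. exact (Hn (conj Ht (conj Hts Hlt))).
Qed.

Lemma exists_near0_window N :
  (forall r, 0 < r -> exists t, 0 < t /\ t < r) ->
  (forall t, 0 < t -> t < s -> abs_lt (F x t) N) ->
  exists L, forall d, 0 < d ->
    near0 s (fun t => L + - d < F x t /\ ~ L + d < F x t).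
Proof.
  intros Hdense HN.
  destruct (hdc _ (def1_near0_lower S hC hF x Cx)) as (L & Hub & Hsup).
  - exists (- N). apply near0_pos; [exact hs|]. intros t Ht Hts. exact (proj1 (HN t Ht Hts)).
  - exists N. intros c (r & Hr & Hrs & Hall) HNc.
    destruct (Hdense r Hr) as (t & Ht & Htr).
    pose proof (proj2 (HN t Ht (lt_nlt_trans Htr Hrs))) as HtN.
    exact (lt_irr M _ (lt_trans M _ _ _ (lt_trans M _ _ _ HNc (Hall t Ht Htr)) HtN)).
  - exists L. intros d Hd. apply near0_and.
    + exact (near0_gt_sub_of_sup L Hsup d Hd).
    + exact (near0_not_gt_add_of_sup L Hub d Hd).
Qed.
End EventualLimit.

Theorem mainTheorem9 (M : OAG) (S : structure M)
  (hdc : definably_complete S) (hlom : locally_o_minimal S)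
  (n : nat) (C : list M -> Prop) (s : M) (F : list M -> M -> M)
  (hC : Def S n C) (hs : lt M (zero M) s)
  (hF : Def S (n + 2) (fun z => exists x t,
          z = x ++ [t; F x t] /\ C x /\ lt M (zero M) t /\ lt M t s))
  (hbnd : forall x, C x -> exists N, lt M (zero M) N /\
          forall t, lt M (zero M) t -> lt M t s -> abs_lt (F x t) N) :
  forall (e : M) x, lt M (zero M) e -> C x ->
    exists s', lt M (zero M) s' /\ ~ lt M s s' /\
      forall t t', lt M (zero M) t -> lt M t s' -> lt M (zero M) t' -> lt M t' s' ->
        abs_lt (sub (F x t) (F x t')) e.
Proof.
  intros e x He Cx. destruct (hbnd x Cx) as (N & _ & HN).
  destruct (classic (exists r, lt M (zero M) r /\
    forall t, lt M (zero M) t -> ~ lt M t r)) as [(r & Hr & Hgap)|Hnogap].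
  { destruct (exists_pos_min Hr hs) as (r' & Hr' & Hrr' & Hsr').
    exists r'. split; [exact Hr'|]. split; [exact Hsr'|]. intros t t' Ht Htr'.
    exfalso. exact (Hgap t Ht (lt_nlt_trans Htr' Hrr')). }
  assert (Hdense : forall r, lt M (zero M) r -> exists t, lt M (zero M) t /\ lt M t r).
  { intros r Hr. apply NNPP. intro Hn. apply Hnogap. exists r. split; [exact Hr|].
    intros t Ht Htr. exact (Hn (ex_intro _ t (conj Ht Htr))). }
  destruct (exists_half He Hdense) as (d & Hd & Hdde).
  destruct (exists_near0_window S hdc hlom hC hF hs x Cx N Hdense HN) as (L & HL).
  destruct (HL d Hd) as (r & Hr & Hrs & Hwin).
  exists r. split; [exact Hr|]. split; [exact Hrs|]. intros t t' Ht Htr Ht' Ht'r.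
  destruct (Hwin t Ht Htr) as [Ht1 Ht2]. destruct (Hwin t' Ht' Ht'r) as [Ht'1 Ht'2].
  exact (abs_lt_sub_of_window Ht1 Ht2 Ht'1 Ht'2 Hdde).
Qed.
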